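(* Let $p,q$ be bivariate polynomials in $(n,N)$ with nonnegative integer coefficients, both of degree $k>1$, neither depending only on $N$, with decompositions as in the context, $P_k,Q_k$ non-constant and $Q_k(0)\le P_k(0)$. Suppose there are real constants $c,r$ such that $\gamma_k(y)=cy$ and $R_k(y)=r$ for all $y\in(0,1]$. Then either $q$ and $p$ have exploding differences, or $c$ and $r$ are rational, there is a constant $d$ such that $q(cn+r,N)-p(n,N)=d$ identically in $n,N$ (so $q,p$ are $\mathbb Q$-equivalent), and for every $\delta\in(0,1)$ there are $W_\delta>0$ and $N_\delta$ such that for all $N>N_\delta$, all integers $\delta N\le n\le N$ and all $m\in\mathbb N$: either $m=cn+r$ (and then $q(m,N)-p(n,N)=d$), or $|q(m,N)-p(n,N)|\ge W_\delta N^{k-1}$.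
   Context: For $p,q$ of degree $k$ write, with $y_1=n/N$, $y_2=m/N$: $p(n,N)=\sum_{j=0}^kN^jP_j(y_1)$ and $q(m,N)=\sum_{j=0}^kN^jQ_j(y_2)$ where $P_j,Q_j$ are polynomials of degree at most $j$. Define $\gamma_k=Q_k^{-1}\circ P_k$ on $[0,\infty)$ and $R_k(y)=\big(P_{k-1}(y)-Q_{k-1}(\gamma_k(y))\big)/Q_k'(\gamma_k(y))$. The degree of a bivariate polynomial $p(x,y)$ is the degree of $p(x,x)$. Exploding differences: $q,p$ have exploding differences if for every $\delta\in(0,1)$ there are $C_\delta>0$, $N_\delta$ and sets $\Gamma_{N,\delta}\subset[1,N]$ of cardinality at most $\delta N$ such that for all $N>N_\delta$ and all integers $n\in[\delta N,N]\setminus\Gamma_{N,\delta}$, $\min_{m\in[\delta N,N]\cap\mathbb N}|q(m,N)-p(n,N)|\ge C_\delta N$. Two polynomials $q,p$ are $\mathbb Q$-equivalent if there exist rationals $c,r$ such that $q(cn+r,N)-p(n,N)$ does not depend on $n$ and $N$. *)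

From Stdlib Require Import Reals Lra Lia List Arith QArith Qreals ClassicalEpsilon.
Open Scope R_scope.

(* A bivariate polynomial in (n,N) with nonnegative integer coefficients is
   represented as a finite list of terms (c, a, b), standing for c * n^a * N^b
   (c : nat).  Repeated monomials are allowed; coefficients add up. *)
Definition term : Type := (nat * nat * nat)%type.
Definition bipoly : Type := list term.

Definition beval (p : bipoly) (x y : R) : R :=
  fold_right (fun (t : term) acc => let '(c, a, b) := t in
    INR c * x ^ a * y ^ b + acc) 0 p.

Definition coef (p : bipoly) (a b : nat) : nat :=
  fold_right (fun (t : term) acc => let '(c, a', b') := t in
    ((if andb (Nat.eqb a' a) (Nat.eqb b' b) then c else 0) + acc)%nat) 0%nat p.

Definition diag_coef (p : bipoly) (j : nat) : nat :=
  fold_right (fun (t : term) acc => let '(c, a, b) := t in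
    ((if Nat.eqb (a + b) j then c else 0) + acc)%nat) 0%nat p.

(* degree of p := degree of p(x,x) *)
Definition has_degree (p : bipoly) (k : nat) : Prop :=
  diag_coef p k <> 0%nat /\ forall j, (k < j)%nat -> diag_coef p j = 0%nat.

Definition depends_on_n (p : bipoly) : Prop :=
  exists a b, (1 <= a)%nat /\ coef p a b <> 0%nat.

(* P_j, where p(n,N) = sum_j N^j P_j(n/N):  P_j(y) = sum_{a+b=j} c_{ab} y^a *)
Definition Pj (p : bipoly) (j : nat) (y : R) : R :=
  fold_right (fun (t : term) acc => let '(c, a, b) := t in
    (if Nat.eqb (a + b) j then INR c * y ^ a else 0) + acc) 0 p.

Definition dPj (p : bipoly) (j : nat) (y : R) : R :=
  fold_right (fun (t : term) acc => let '(c, a, b) := t in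
    (if Nat.eqb (a + b) j then INR c * INR a * y ^ (a - 1) else 0) + acc) 0 p.

Definition Pj_nonconstant (p : bipoly) (j : nat) : Prop :=
  exists a b, (1 <= a)%nat /\ (a + b = j)%nat /\ coef p a b <> 0%nat.

(* gamma_k = Q_k^{-1} o P_k on [0,oo), Q_k^{-1} being the inverse of Q_k
   restricted to [0,oo) (chosen by definite description) *)
Definition gammak (p q : bipoly) (k : nat) (y : R) : R :=
  epsilon (inhabits 0) (fun z => 0 <= z /\ Pj q k z = Pj p k y).

Definition Rk (p q : bipoly) (k : nat) (y : R) : R :=
  (Pj p (k - 1) y - Pj q (k - 1) (gammak p q k y)) / dPj q k (gammak p q k y).

Definition exploding_differences (q p : bipoly) : Prop :=
  forall delta : R, 0 < delta < 1 ->
    exists (C : R) (Nd : nat) (Gamma : nat -> list nat),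
      0 < C /\
      (forall N, Forall (fun g => (1 <= g <= N)%nat) (Gamma N) /\
                 INR (length (Gamma N)) <= delta * INR N) /\
      forall N : nat, (Nd < N)%nat ->
        forall n : nat, delta * INR N <= INR n <= INR N -> ~ In n (Gamma N) ->
          forall m : nat, delta * INR N <= INR m <= INR N ->
            Rabs (beval q (INR m) (INR N) - beval p (INR n) (INR N)) >= C * INR N.

(* Let D(x, y) = q(c x + r, y) - p(x, y) be the difference along the line m = c n + r.
   1. The hypotheses on gamma_k and R_k amount to c > 0, Q_k(c y) = P_k(y) and
      r Q_k'(c y) = P_{k-1}(y) - Q_{k-1}(c y) on (0, 1].  Expanding q(c s N + r, N) to second
      order in N, the N^k and N^(k-1) terms of D(s N, N) cancel: D(x, N) = O(N^(k-2))
      uniformly for 0 < x <= N  ([line_diff_small]).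
   2. q grows in its first variable through a monomial n^a N^b with a >= 1, a + b = k, so
      |m - (c n + r)| >= t gives |q(m, N) - p(n, N)| >= W N^(k-1) for n >= delta N
      ([off_line_separation]).
   3. If c or r is irrational, c n + r is within eps of an integer only for a delta-fraction
      of the n <= N, and step 2 applies to all the other n: exploding differences.
   4. If c, r are rational with common denominator e, integers off the line are 1/e away
      from it, so only the values of D on the line matter.  Either D is constant (the
      Q-equivalence alternative); or D(., N) is, for all large N, a nonconstant polynomial
      of degree <= k with values in e^-k Z, hence small at few integers; or D depends on N
      only and grows linearly.  The last two cases give exploding differences.
   The file develops these steps in order: monotonicity facts for P_j, the expansion,
   the separation estimate, polynomial functions, counting lemmas, and the case analysis. *)

From Stdlib Require Import Reals Lra Lia List ZArith QArith Qreals ClassicalEpsilon Classical.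
Open Scope R_scope.

Definition deg_bounded (k : nat) (p : bipoly) : Prop :=
  forall co a b, In (co, a, b) p -> (k < a + b)%nat -> co = 0%nat.

Lemma diag_coef_zero p j : diag_coef p j = 0%nat ->
  forall co a b, In (co, a, b) p -> (a + b = j)%nat -> co = 0%nat.
Proof.
  induction p as [|[[co' a'] b'] p IH]; simpl; intros H co a b Hin Hab; [contradiction|].
  destruct Hin as [E|Hin].
  - inversion E; subst. rewrite Nat.eqb_refl in H. lia.
  - exact (IH ltac:(lia) co a b Hin Hab).
Qed.

Lemma has_degree_bounded p k : has_degree p k -> deg_bounded k p.
Proof.
  intros [_ H] co a b Hin Hk. exact (diag_coef_zero p (a + b) (H _ Hk) co a b Hin eq_refl).
Qed.

Lemma deg_bounded_tail k t p : deg_bounded k (t :: p) -> deg_bounded k p.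
Proof. intros H co a b Hin. apply (H co a b). right; exact Hin. Qed.

Lemma pow_sub_lower (x x' : R) (a : nat) : (1 <= a)%nat -> 0 <= x <= x' ->
  (x' - x) * x' ^ (a - 1) <= x' ^ a - x ^ a.
Proof.
  intros Ha Hx. destruct a as [|a]; [lia|]. replace (S a - 1)%nat with a by lia.
  induction a as [|a IH]; simpl in *; [lra|].
  assert (0 <= x ^ a * x) by (apply Rmult_le_pos; [apply pow_le|]; lra).
  assert (x ^ a <= x' ^ a) by (apply pow_incr; lra).
  specialize (IH ltac:(lia)). nra.
Qed.

Lemma pow_sub_nonneg (x x' : R) (a : nat) : 0 <= x <= x' -> 0 <= x' ^ a - x ^ a.
Proof. intros Hx. assert (x ^ a <= x' ^ a) by (apply pow_incr; lra). lra. Qed.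

Lemma coef_ge1 p a b : coef p a b <> 0%nat -> 1 <= INR (coef p a b).
Proof. intros H. apply (le_INR 1). lia. Qed.

Lemma beval_increment q a b x x' y : 0 <= x <= x' -> 0 <= y ->
  INR (coef q a b) * (x' ^ a - x ^ a) * y ^ b <= beval q x' y - beval q x y.
Proof.
  intros Hx Hy. induction q as [|[[co a'] b'] q IH]; simpl; [lra|].
  rewrite plus_INR.
  pose proof (pow_sub_nonneg x x' a Hx). pose proof (pow_sub_nonneg x x' a' Hx).
  assert (0 <= y ^ b) by (apply pow_le; lra). assert (0 <= y ^ b') by (apply pow_le; lra).
  assert (0 <= INR co) by apply pos_INR.
  assert (0 <= INR co * (x' ^ a' - x ^ a') * y ^ b') by (apply Rmult_le_pos; [apply Rmult_le_pos|]; lra).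
  destruct (Nat.eqb a' a) eqn:E1; destruct (Nat.eqb b' b) eqn:E2; simpl;
    try (apply Nat.eqb_eq in E1; apply Nat.eqb_eq in E2; subst); nra.
Qed.

Lemma Pj_increment p j a b x x' : (a + b = j)%nat -> 0 <= x <= x' ->
  INR (coef p a b) * (x' ^ a - x ^ a) <= Pj p j x' - Pj p j x.
Proof.
  intros Hab Hx. induction p as [|[[co a'] b'] p IH]; unfold Pj in *; simpl; [lra|].
  rewrite plus_INR.
  pose proof (pow_sub_nonneg x x' a Hx). pose proof (pow_sub_nonneg x x' a' Hx).
  assert (0 <= INR co) by apply pos_INR.
  destruct (Nat.eqb a' a) eqn:E1; destruct (Nat.eqb b' b) eqn:E2; simpl;
    try (apply Nat.eqb_eq in E1; apply Nat.eqb_eq in E2; subst);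
    try rewrite Nat.eqb_refl;
    try (match goal with |- context [Nat.eqb (?u + ?v) ?w] => destruct (Nat.eqb (u + v) w) end);
    nra.
Qed.

Lemma dPj_lower p j a b z : (a + b = j)%nat -> 0 <= z ->
  INR (coef p a b) * INR a * z ^ (a - 1) <= dPj p j z.
Proof.
  intros Hab Hz. induction p as [|[[co a'] b'] p IH]; unfold dPj in *; simpl; [lra|].
  rewrite plus_INR.
  assert (0 <= INR co * INR a' * z ^ (a' - 1)).
  { apply Rmult_le_pos; [apply Rmult_le_pos; apply pos_INR|apply pow_le; lra]. }
  assert (0 <= INR a * z ^ (a - 1)) by (apply Rmult_le_pos; [apply pos_INR|apply pow_le; lra]).
  destruct (Nat.eqb a' a) eqn:E1; destruct (Nat.eqb b' b) eqn:E2; simpl;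
    try (apply Nat.eqb_eq in E1; apply Nat.eqb_eq in E2; subst);
    try rewrite Nat.eqb_refl;
    try (match goal with |- context [Nat.eqb (?u + ?v) ?w] => destruct (Nat.eqb (u + v) w) end);
    nra.
Qed.

Lemma Pj_continuous (p : bipoly) j : continuity (Pj p j).
Proof.
  induction p as [|[[co a] b] p IH].
  - unfold Pj; simpl. apply continuity_const. intros x y; reflexivity.
  - change (continuity (fun z => (if Nat.eqb (a + b) j then INR co * z ^ a else 0) + Pj p j z)).
    apply (continuity_plus _ (Pj p j)); [|exact IH].
    destruct (Nat.eqb (a + b) j).
    + apply derivable_continuous. reg.
    + apply continuity_const. intros x y; reflexivity.
Qed.

Lemma Pj_nondecreasing p j x x' : 0 <= x <= x' -> Pj p j x <= Pj p j x'.
Proof.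
  intros Hx. pose proof (Pj_increment p j 0 j x x' eq_refl Hx). simpl in H.
  assert (0 <= INR (coef p 0 j)) by apply pos_INR. nra.
Qed.

Lemma Pj_growth p j x x' : Pj_nonconstant p j -> 0 <= x <= x' ->
  exists a, (1 <= a)%nat /\ (x' - x) * x' ^ (a - 1) <= Pj p j x' - Pj p j x.
Proof.
  intros [a [b [Ha [Hab Hc]]]] Hx. exists a; split; [exact Ha|].
  pose proof (Pj_increment p j a b x x' Hab Hx). pose proof (coef_ge1 _ _ _ Hc).
  pose proof (pow_sub_lower x x' a Ha Hx). pose proof (pow_sub_nonneg x x' a Hx).
  nra.
Qed.

(* Q_k^{-1} o P_k is well defined on [0, oo): Q_k(0) <= P_k(y) and Q_k is unbounded. *)
Lemma Pj_preimage p q k y : Pj_nonconstant q k -> Pj q k 0 <= Pj p k 0 -> 0 <= y ->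
  exists z, 0 <= z /\ Pj q k z = Pj p k y.
Proof.
  intros Hq H0 Hy.
  assert (Hm : Pj p k 0 <= Pj p k y) by (apply Pj_nondecreasing; lra).
  set (Z := 1 + Pj p k y - Pj q k 0).
  destruct (Pj_growth q k 0 Z Hq ltac:(unfold Z; lra)) as [a [Ha Hg]].
  assert (1 <= Z ^ (a - 1)) by (apply pow_R1_Rle; unfold Z; lra).
  destruct (IVT_cor (fun z => Pj q k z - Pj p k y) 0 Z) as [z [Hz Hf]].
  - apply continuity_minus; [apply Pj_continuous|].
    apply continuity_const. intros u v; reflexivity.
  - unfold Z; lra.
  - assert (Pj q k Z - Pj p k y >= 0) by (unfold Z in *; nra). nra.
  - exists z; split; [lra|]. simpl in Hf. lra.
Qed.

(* Q_k' > 0 on (0, oo), so the division defining R_k is legitimate. *)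
Lemma dPj_pos q k z : Pj_nonconstant q k -> 0 < z -> 0 < dPj q k z.
Proof.
  intros [a [b [Ha [Hab Hc]]]] Hz.
  pose proof (dPj_lower q k a b z Hab ltac:(lra)). pose proof (coef_ge1 _ _ _ Hc).
  assert (1 <= INR a) by (apply (le_INR 1); lia).
  assert (0 < z ^ (a - 1)) by (apply pow_lt; lra).
  assert (0 < INR (coef q a b) * INR a) by nra. nra.
Qed.

Lemma linear_gamma_identities p q k c r :
  Pj_nonconstant p k -> Pj_nonconstant q k -> Pj q k 0 <= Pj p k 0 ->
  (forall y, 0 < y <= 1 -> gammak p q k y = c * y) ->
  (forall y, 0 < y <= 1 -> Rk p q k y = r) ->
  0 < c /\ forall y, 0 < y <= 1 -> Pj q k (c * y) = Pj p k y /\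
     r * dPj q k (c * y) = Pj p (k - 1) y - Pj q (k - 1) (c * y).
Proof.
  intros Hp Hq H0 Hg Hr.
  assert (Hspec : forall y, 0 < y <= 1 -> 0 <= c * y /\ Pj q k (c * y) = Pj p k y).
  { intros y Hy. rewrite <- (Hg y Hy). unfold gammak. apply epsilon_spec.
    apply Pj_preimage; auto; lra. }
  (* c = 0 would give Q_k(0) = P_k(1) > P_k(0) >= Q_k(0) *)
  assert (Hc : 0 < c).
  { destruct (Hspec 1 ltac:(lra)) as [H1 H2]. rewrite Rmult_1_r in *.
    destruct (Pj_growth p k 0 1 Hp ltac:(lra)) as [a [_ Hgr]]. rewrite pow1 in Hgr.
    destruct (Req_dec c 0) as [E|E]; [subst c; lra|lra]. }
  split; [exact Hc|]. intros y Hy. split; [apply Hspec, Hy|].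
  pose proof (Hr y Hy) as HR. unfold Rk in HR. rewrite (Hg y Hy) in HR.
  assert (0 < dPj q k (c * y)) by (apply dPj_pos; auto; nra).
  rewrite <- HR. field. lra.
Qed.

(** * Second-order expansion of q(w N + r, N) in powers of N *)

Section Expansion.
Variables (r M : R).
Hypothesis HM : 1 <= M.
Hypothesis HrM : Rabs r <= M.

Lemma scaled_abs_le w y : Rabs w <= M -> 1 <= y -> Rabs (w * y) <= M * y.
Proof. intros Hw Hy. rewrite Rabs_mult, (Rabs_right y) by lra. nra. Qed.

Lemma shifted_abs_le w y : Rabs w <= M -> 1 <= y -> Rabs (w * y + r) <= 2 * M * y.
Proof.
  intros Hw Hy. pose proof (scaled_abs_le w y Hw Hy).
  pose proof (Rabs_triang (w * y) r). nra.
Qed.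

Lemma pow_abs_le x B a : Rabs x <= B -> Rabs (x ^ a) <= B ^ a.
Proof. intros H. rewrite <- RPow_abs. apply pow_incr. split; [apply Rabs_pos|exact H]. Qed.

Lemma shifted_pow_bound a : exists K, forall w y, Rabs w <= M -> 1 <= y ->
  Rabs ((w * y + r) ^ a) <= K * y ^ a.
Proof.
  exists ((2 * M) ^ a). intros w y Hw Hy.
  rewrite <- Rpow_mult_distr. apply pow_abs_le.
  pose proof (shifted_abs_le w y Hw Hy). lra.
Qed.

Lemma shifted_pow_first_order a : exists K, forall w y, Rabs w <= M -> 1 <= y ->
  Rabs ((w * y + r) ^ a - (w * y) ^ a) * y <= K * y ^ a.
Proof.
  induction a as [|a [K IH]].
  - exists 0. intros. simpl. rewrite Rminus_diag, Rabs_R0. lra.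
  - exists (2 * M * K + M ^ S a). intros w y Hw Hy.
    set (u := w * y). set (e := (u + r) ^ a - u ^ a).
    replace ((u + r) ^ S a - u ^ S a) with ((u + r) * e + r * u ^ a) by (unfold e; simpl; ring).
    pose proof (IH w y Hw Hy) as H1. fold u e in H1.
    pose proof (shifted_abs_le w y Hw Hy) as H2. fold u in H2.
    pose proof (pow_abs_le u (M * y) a (scaled_abs_le w y Hw Hy)) as H3.
    rewrite Rpow_mult_distr in H3.
    assert (0 <= y ^ a) by (apply pow_le; lra). assert (0 <= M ^ a) by (apply pow_le; lra).
    pose proof (Rabs_triang ((u + r) * e) (r * u ^ a)) as T. rewrite !Rabs_mult in T.
    assert (A1 : Rabs (u + r) * (Rabs e * y) <= 2 * M * y * (K * y ^ a)).
    { apply Rmult_le_compat; try apply Rabs_pos; try lra.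
      apply Rmult_le_pos; [apply Rabs_pos|lra]. }
    assert (A2 : Rabs r * Rabs (u ^ a) <= M * (M ^ a * y ^ a))
      by (apply Rmult_le_compat; try apply Rabs_pos; lra).
    simpl. nra.
Qed.

Lemma shifted_pow_second_order a : exists K, forall w y, Rabs w <= M -> 1 <= y ->
  Rabs ((w * y + r) ^ a - (w * y) ^ a - INR a * r * (w * y) ^ (a - 1)) * y ^ 2 <= K * y ^ a.
Proof.
  induction a as [|a [K IH]].
  - exists 0. intros. simpl. replace (1 - 1 - 0 * r * 1) with 0 by ring. rewrite Rabs_R0. lra.
  - destruct a as [|a].
    { exists 0. intros. simpl. replace ((w * y + r) * 1 - w * y * 1 - 1 * r * 1) with 0 by ring.
      rewrite Rabs_R0. lra. }
    exists (2 * M * K + INR (S a) * M ^ S (S a)). intros w y Hw Hy.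
    set (u := w * y). set (e := (u + r) ^ S a - u ^ S a - INR (S a) * r * u ^ (S a - 1)).
    replace ((u + r) ^ S (S a) - u ^ S (S a) - INR (S (S a)) * r * u ^ (S (S a) - 1))
      with ((u + r) * e + INR (S a) * r ^ 2 * u ^ a)
      by (unfold e; replace (S a - 1)%nat with a by lia;
          replace (S (S a) - 1)%nat with (S a) by lia; rewrite !S_INR; simpl; ring).
    pose proof (IH w y Hw Hy) as H1. fold u e in H1.
    pose proof (shifted_abs_le w y Hw Hy) as H2. fold u in H2.
    pose proof (pow_abs_le u (M * y) a (scaled_abs_le w y Hw Hy)) as H3.
    rewrite Rpow_mult_distr in H3.
    assert (0 <= y ^ S a) by (apply pow_le; lra). assert (0 <= y ^ a) by (apply pow_le; lra).
    assert (0 <= y ^ 2) by (apply pow_le; lra). assert (0 <= M ^ a) by (apply pow_le; lra).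
    assert (Hr2 : Rabs (r ^ 2) <= M ^ 2) by (apply pow_abs_le; exact HrM).
    assert (0 <= INR (S a)) by apply pos_INR.
    pose proof (Rabs_triang ((u + r) * e) (INR (S a) * r ^ 2 * u ^ a)) as T.
    rewrite !Rabs_mult, (Rabs_right (INR (S a))) in T by lra.
    assert (A1 : Rabs (u + r) * (Rabs e * y ^ 2) <= 2 * M * y * (K * y ^ S a)).
    { apply Rmult_le_compat; try apply Rabs_pos; try lra.
      apply Rmult_le_pos; [apply Rabs_pos|lra]. }
    assert (A2 : Rabs (r ^ 2) * Rabs (u ^ a) <= M ^ 2 * (M ^ a * y ^ a))
      by (apply Rmult_le_compat; try apply Rabs_pos; lra).
    assert (A3 : INR (S a) * (Rabs (r ^ 2) * Rabs (u ^ a)) * y ^ 2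
                 <= INR (S a) * (M ^ 2 * (M ^ a * y ^ a)) * y ^ 2).
    { apply Rmult_le_compat_r; [lra|]. apply Rmult_le_compat_l; lra. }
    simpl in *. nra.
Qed.

Lemma monomial_bound co b X j K a y : 1 <= y ->
  Rabs X * y ^ j <= K * y ^ a ->
  Rabs (INR co * y ^ b * X) * y ^ j <= INR co * K * y ^ (a + b).
Proof.
  intros Hy H. assert (0 <= INR co) by apply pos_INR. assert (0 <= y ^ b) by (apply pow_le; lra).
  rewrite !Rabs_mult, (Rabs_right (INR co)), (Rabs_right (y ^ b)), pow_add by lra.
  replace (INR co * y ^ b * Rabs X * y ^ j) with (INR co * y ^ b * (Rabs X * y ^ j)) by ring.
  replace (INR co * K * (y ^ a * y ^ b)) with (INR co * y ^ b * (K * y ^ a)) by ring.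
  apply Rmult_le_compat_l; [apply Rmult_le_pos|]; lra.
Qed.

(* monomials of top degree k: the error is the second-order Taylor remainder *)
Lemma top_term_bound k co a b : (a + b = k)%nat ->
  exists K, forall w y, Rabs w <= M -> 1 <= y ->
  Rabs (INR co * (w * y + r) ^ a * y ^ b
        - (y ^ k * (INR co * w ^ a) + y ^ (k - 1) * (r * (INR co * INR a * w ^ (a - 1)))))
    * y ^ 2 <= K * y ^ k.
Proof.
  intros Hab. destruct (shifted_pow_second_order a) as [K HK]. exists (INR co * K).
  intros w y Hw Hy. rewrite <- Hab.
  replace (INR co * (w * y + r) ^ a * y ^ b
        - (y ^ (a + b) * (INR co * w ^ a) + y ^ (a + b - 1) * (r * (INR co * INR a * w ^ (a - 1)))))
    with (INR co * y ^ b * ((w * y + r) ^ a - (w * y) ^ a - INR a * r * (w * y) ^ (a - 1))).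
  - apply monomial_bound; auto.
  - destruct a as [|a]; [simpl; ring|].
    replace (S a + b - 1)%nat with (a + b)%nat by lia. replace (S a - 1)%nat with a by lia.
    rewrite !pow_add, !Rpow_mult_distr. simpl. ring.
Qed.

(* monomials of degree k - 1: the error is the first-order Taylor remainder *)
Lemma next_term_bound k co a b : (a + b = k - 1)%nat -> (1 <= k)%nat ->
  exists K, forall w y, Rabs w <= M -> 1 <= y ->
  Rabs (INR co * (w * y + r) ^ a * y ^ b - y ^ (k - 1) * (INR co * w ^ a)) * y ^ 2 <= K * y ^ k.
Proof.
  intros Hab Hk. destruct (shifted_pow_first_order a) as [K HK]. exists (INR co * K).
  intros w y Hw Hy.
  replace (INR co * (w * y + r) ^ a * y ^ b - y ^ (k - 1) * (INR co * w ^ a))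
    with (INR co * y ^ b * ((w * y + r) ^ a - (w * y) ^ a))
    by (rewrite <- Hab, pow_add, Rpow_mult_distr; ring).
  pose proof (monomial_bound co b _ 1 K a y Hy ltac:(rewrite pow_1; exact (HK w y Hw Hy))) as H.
  replace k with (S (a + b)) by lia. simpl. rewrite pow_1 in H. nra.
Qed.

Lemma low_term_bound k co a b : (a + b + 2 <= k)%nat ->
  exists K, forall w y, Rabs w <= M -> 1 <= y ->
  Rabs (INR co * (w * y + r) ^ a * y ^ b) * y ^ 2 <= K * y ^ k.
Proof.
  intros Hab. destruct (shifted_pow_bound a) as [K HK]. exists (INR co * K).
  intros w y Hw Hy. pose proof (HK w y Hw Hy) as Ha.
  assert (0 <= K) by (assert (0 < y ^ a) by (apply pow_lt; lra); pose proof (Rabs_pos ((w * y + r) ^ a)); nra).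
  assert (0 <= INR co) by apply pos_INR.
  pose proof (monomial_bound co b ((w * y + r) ^ a) 0 K a y Hy ltac:(rewrite pow_O; lra)) as Hm.
  rewrite pow_O, Rmult_1_r in Hm.
  replace (INR co * y ^ b * (w * y + r) ^ a) with (INR co * (w * y + r) ^ a * y ^ b) in Hm by ring.
  assert (Hpow : y ^ (a + b) * y ^ 2 <= y ^ k)
    by (rewrite <- pow_add; apply Rle_pow; [lra|lia]).
  assert (0 <= y ^ 2) by (apply pow_le; lra).
  assert (0 <= INR co * K) by nra.
  apply Rle_trans with (INR co * K * y ^ (a + b) * y ^ 2).
  - apply Rmult_le_compat_r; lra.
  - rewrite Rmult_assoc. apply Rmult_le_compat_l; lra.
Qed.

(* The contribution of the monomial co n^a N^b to the N^k and N^(k-1) coefficients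
   of q(w N + r, N). *)
Definition term_expansion (k co a b : nat) (w y : R) : R :=
  y ^ k * (if Nat.eqb (a + b) k then INR co * w ^ a else 0) +
  y ^ (k - 1) * (r * (if Nat.eqb (a + b) k then INR co * INR a * w ^ (a - 1) else 0) +
                 (if Nat.eqb (a + b) (k - 1) then INR co * w ^ a else 0)).

Lemma term_expansion_bound k co a b : (2 <= k)%nat -> ((k < a + b)%nat -> co = 0%nat) ->
  exists K, forall w y, Rabs w <= M -> 1 <= y ->
  Rabs (INR co * (w * y + r) ^ a * y ^ b - term_expansion k co a b w y) * y ^ 2 <= K * y ^ k.
Proof.
  intros Hk Hdeg. unfold term_expansion.
  destruct (Nat.eqb (a + b) k) eqn:E1; [|destruct (Nat.eqb (a + b) (k - 1)) eqn:E2].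
  - apply Nat.eqb_eq in E1.
    replace (Nat.eqb (a + b) (k - 1)) with false by (symmetry; apply Nat.eqb_neq; lia).
    destruct (top_term_bound k co a b E1) as [K HK]. exists K. intros w y Hw Hy.
    rewrite Rplus_0_r. exact (HK w y Hw Hy).
  - apply Nat.eqb_eq in E2. destruct (next_term_bound k co a b E2 ltac:(lia)) as [K HK].
    exists K. intros w y Hw Hy. rewrite Rmult_0_r, Rmult_0_r, !Rplus_0_l. exact (HK w y Hw Hy).
  - apply Nat.eqb_neq in E1. apply Nat.eqb_neq in E2.
    destruct (Nat.lt_ge_cases k (a + b)) as [L|L].
    + exists 0. intros w y Hw Hy. rewrite (Hdeg L). simpl.
      replace (0 * (w * y + r) ^ a * y ^ b - (y ^ k * 0 + y ^ (k - 1) * (r * 0 + 0))) with 0 by ring.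
      rewrite Rabs_R0. lra.
    + destruct (low_term_bound k co a b ltac:(lia)) as [K HK]. exists K. intros w y Hw Hy.
      replace (INR co * (w * y + r) ^ a * y ^ b - (y ^ k * 0 + y ^ (k - 1) * (r * 0 + 0)))
        with (INR co * (w * y + r) ^ a * y ^ b) by ring.
      exact (HK w y Hw Hy).
Qed.

Lemma beval_shift_expansion k q : (2 <= k)%nat -> deg_bounded k q ->
  exists K, forall w y, Rabs w <= M -> 1 <= y ->
  Rabs (beval q (w * y + r) y
        - (y ^ k * Pj q k w + y ^ (k - 1) * (r * dPj q k w + Pj q (k - 1) w))) * y ^ 2
   <= K * y ^ k.
Proof.
  intros Hk. induction q as [|[[co a] b] q IH]; intros Hdeg.
  - exists 0. intros. unfold beval, Pj, dPj; simpl.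
    replace (0 - (y ^ k * 0 + y ^ (k - 1) * (r * 0 + 0))) with 0 by ring. rewrite Rabs_R0. lra.
  - destruct (IH (deg_bounded_tail _ _ _ Hdeg)) as [K1 H1].
    destruct (term_expansion_bound k co a b Hk (Hdeg co a b (or_introl eq_refl))) as [K2 H2].
    exists (K2 + K1). intros w y Hw Hy.
    specialize (H1 w y Hw Hy). specialize (H2 w y Hw Hy).
    set (X := INR co * (w * y + r) ^ a * y ^ b - term_expansion k co a b w y) in H2.
    set (Y := beval q (w * y + r) y
              - (y ^ k * Pj q k w + y ^ (k - 1) * (r * dPj q k w + Pj q (k - 1) w))) in H1.
    match goal with |- Rabs ?e * _ <= _ => replace e with (X + Y) end.
    + pose proof (Rabs_triang X Y). assert (0 <= y ^ 2) by (apply pow_le; lra). nra.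
    + unfold X, Y, term_expansion, beval, Pj, dPj. simpl. ring.
Qed.
End Expansion.

(** * Behaviour near and away from the line m = c n + r *)

Definition line_diff (q p : bipoly) (c r x y : R) : R := beval q (c * x + r) y - beval p x y.

(* The identities of [linear_gamma_identities] cancel the N^k and N^(k-1) terms of
   D(x, N): D(x, N) = O(N^(k-2)) uniformly in 0 < x <= N. *)
Lemma line_diff_small p q k c r : (2 <= k)%nat -> deg_bounded k p -> deg_bounded k q -> 0 < c ->
  (forall y, 0 < y <= 1 -> Pj q k (c * y) = Pj p k y /\
     r * dPj q k (c * y) = Pj p (k - 1) y - Pj q (k - 1) (c * y)) ->
  exists K, forall x y, 0 < x <= y -> 1 <= y -> Rabs (line_diff q p c r x y) * y ^ 2 <= K * y ^ k.
Proof.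
  intros Hk Hp Hq Hc Hid.
  set (M := 1 + Rabs c + Rabs r).
  pose proof (Rabs_pos c). pose proof (Rabs_pos r).
  assert (HM : 1 <= M) by (unfold M; lra).
  destruct (beval_shift_expansion r M HM ltac:(unfold M; lra) k q Hk Hq) as [Kq HKq].
  destruct (beval_shift_expansion 0 M HM ltac:(rewrite Rabs_R0; lra) k p Hk Hp) as [Kp HKp].
  exists (Kq + Kp). intros x y Hx Hy.
  set (s := x / y).
  assert (Hs : 0 < s <= 1).
  { unfold s. split; [apply Rdiv_lt_0_compat; lra|].
    apply (Rmult_le_reg_r y); [lra|]. unfold Rdiv. rewrite Rmult_assoc, Rinv_l by lra. lra. }
  assert (Hxs : x = s * y) by (unfold s; field; lra).
  specialize (HKq (c * s) y ltac:(rewrite Rabs_mult, (Rabs_right s) by lra; unfold M; nra) Hy).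
  specialize (HKp s y ltac:(rewrite Rabs_right by lra; lra) Hy).
  destruct (Hid s Hs) as [E1 E2].
  unfold line_diff.
  replace (c * x + r) with (c * s * y + r) by (rewrite Hxs; ring).
  replace (beval p x y) with (beval p (s * y + 0) y) by (rewrite Hxs; f_equal; ring).
  set (X := beval q (c * s * y + r) y
            - (y ^ k * Pj q k (c * s) + y ^ (k - 1) * (r * dPj q k (c * s) + Pj q (k - 1) (c * s))))
    in HKq.
  set (Y := beval p (s * y + 0) y
            - (y ^ k * Pj p k s + y ^ (k - 1) * (0 * dPj p k s + Pj p (k - 1) s))) in HKp.
  replace (beval q (c * s * y + r) y - beval p (s * y + 0) y) with (X - Y)
    by (unfold X, Y; rewrite E1, E2; ring).
  pose proof (Rabs_triang X (- Y)). rewrite Rabs_Ropp in H1.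
  assert (0 <= y ^ 2) by (apply pow_le; lra). unfold Rminus. nra.
Qed.

Lemma beval_separation q a b x x' y rho : (1 <= a)%nat -> coef q a b <> 0%nat ->
  0 <= x -> 0 <= x' -> 0 <= y -> 0 <= rho -> (rho <= x \/ rho <= x') ->
  Rabs (x' - x) * rho ^ (a - 1) * y ^ b <= Rabs (beval q x' y - beval q x y).
Proof.
  intros Ha Hc Hx Hx' Hy Hr Hrho.
  assert (Hgrowth : forall u u', 0 <= u <= u' -> rho <= u' ->
            (u' - u) * rho ^ (a - 1) * y ^ b <= beval q u' y - beval q u y).
  { intros u u' Hu Hu'.
    pose proof (beval_increment q a b u u' y Hu Hy). pose proof (coef_ge1 _ _ _ Hc).
    pose proof (pow_sub_lower u u' a Ha Hu). pose proof (pow_sub_nonneg u u' a Hu).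
    assert (rho ^ (a - 1) <= u' ^ (a - 1)) by (apply pow_incr; lra).
    assert (0 <= rho ^ (a - 1)) by (apply pow_le; lra).
    assert (0 <= y ^ b) by (apply pow_le; lra).
    assert ((u' - u) * rho ^ (a - 1) <= u' ^ a - u ^ a) by nra.
    assert ((u' - u) * rho ^ (a - 1) * y ^ b <= (u' ^ a - u ^ a) * y ^ b)
      by (apply Rmult_le_compat_r; lra).
    assert (0 <= (u' ^ a - u ^ a) * y ^ b) by (apply Rmult_le_pos; lra).
    assert ((u' ^ a - u ^ a) * y ^ b <= INR (coef q a b) * (u' ^ a - u ^ a) * y ^ b)
      by (rewrite Rmult_assoc; nra).
    lra. }
  destruct (Rle_dec x x') as [L|L].
  - pose proof (Hgrowth x x' ltac:(lra) ltac:(lra)).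
    rewrite (Rabs_right (x' - x)) by lra. pose proof (Rle_abs (beval q x' y - beval q x y)). lra.
  - pose proof (Hgrowth x' x ltac:(lra) ltac:(lra)).
    rewrite (Rabs_left1 (x' - x)) by lra. rewrite <- Rabs_Ropp.
    pose proof (Rle_abs (- (beval q x' y - beval q x y))). lra.
Qed.

Lemma large_N (A : R) : exists N1 : nat, forall N : nat, (N1 < N)%nat -> A < INR N.
Proof.
  destruct (INR_unbounded A) as [n Hn]. exists n. intros N HN.
  apply lt_INR in HN. lra.
Qed.

Lemma Rdiv_le_mult a b y : 0 < b -> a / b <= y -> a <= b * y.
Proof.
  intros Hb H. apply (Rmult_le_compat_l b) in H; [|lra].
  replace (b * (a / b)) with a in H by (field; lra). exact H.
Qed.

(* X N^2 <= K N^k means X = O(N^(k-2)); in particular X <= W N^(k-1) once |K| <= W N. *)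
Lemma lower_order_le K X y k W : (1 <= k)%nat -> 1 <= y -> Rabs K <= W * y ->
  X * y ^ 2 <= K * y ^ k -> X <= W * y ^ (k - 1).
Proof.
  intros Hk Hy HKy HX.
  assert (Hpow : y ^ (k - 1) * y ^ 2 = y * y ^ k)
    by (replace k with (S (k - 1)) at 2 by lia; simpl; ring).
  assert (0 < y ^ k) by (apply pow_lt; lra).
  apply (Rmult_le_reg_r (y ^ 2)); [apply pow_lt; lra|].
  rewrite Rmult_assoc, Hpow. pose proof (Rle_abs K). nra.
Qed.

Definition off_line_bound (q p : bipoly) (k : nat) (c r t : R) : Prop :=
  forall delta, 0 < delta < 1 -> exists W, 0 < W /\ exists N1 : nat, forall N : nat, (N1 < N)%nat ->
    forall n : nat, delta * INR N <= INR n <= INR N -> forall m : nat,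
      t <= Rabs (INR m - (c * INR n + r)) ->
      W * INR N ^ (k - 1) <= Rabs (beval q (INR m) (INR N) - beval p (INR n) (INR N)).

(* Write q(m,N) - p(n,N) = [q(m,N) - q(cn+r,N)] + D(n,N): the first bracket is of order
   N^(k-1) by [beval_separation] (with a + b = k), the second O(N^(k-2)). *)
Lemma off_line_separation p q k c r K t : (2 <= k)%nat -> Pj_nonconstant q k -> 0 < c -> 0 < t ->
  (forall x y, 0 < x <= y -> 1 <= y -> Rabs (line_diff q p c r x y) * y ^ 2 <= K * y ^ k) ->
  off_line_bound q p k c r t.
Proof.
  intros Hk [a [b [Ha [Hab Hcoef]]]] Hc Ht HK delta Hd.
  set (rho := c * delta / 2). assert (Hrho : 0 < rho) by (unfold rho; nra).
  set (W0 := t * rho ^ (a - 1)).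
  assert (HW0 : 0 < W0) by (unfold W0; apply Rmult_lt_0_compat; [lra|apply pow_lt; lra]).
  exists (W0 / 2). split; [lra|].
  destruct (large_N (1 + 2 * (Rabs r / rho) + Rabs K * 2 / W0)) as [N1 HN1].
  exists N1. intros N HN n Hn m Hm. specialize (HN1 N HN).
  assert (0 <= Rabs r / rho) by (unfold Rdiv; apply Rle_mult_inv_pos; [apply Rabs_pos|lra]).
  assert (0 <= Rabs K * 2 / W0) by (unfold Rdiv; apply Rle_mult_inv_pos; [pose proof (Rabs_pos K); lra|lra]).
  set (x := c * INR n + r) in *. set (y := INR N) in *.
  assert (Hrx : rho * y <= x).
  { assert (Rabs r <= rho * (y / 2)) by (apply Rdiv_le_mult; lra).
    pose proof (Rle_abs (- r)). rewrite Rabs_Ropp in H2.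
    assert (c * (delta * y) <= c * INR n) by (apply Rmult_le_compat_l; lra).
    unfold x, rho in *. nra. }
  assert (Hgrow : W0 * y ^ (k - 1) <= Rabs (beval q (INR m) y - beval q x y)).
  { pose proof (beval_separation q a b x (INR m) y (rho * y) Ha Hcoef
      ltac:(nra) (pos_INR m) ltac:(lra) ltac:(nra) (or_introl Hrx)) as Hg.
    replace (k - 1)%nat with ((a - 1) + b)%nat by lia.
    rewrite Rpow_mult_distr in Hg. rewrite pow_add. unfold W0.
    assert (0 <= rho ^ (a - 1) * (y ^ (a - 1) * y ^ b)) by (repeat apply Rmult_le_pos; apply pow_le; lra).
    assert (t * (rho ^ (a - 1) * (y ^ (a - 1) * y ^ b))
            <= Rabs (INR m - x) * (rho ^ (a - 1) * (y ^ (a - 1) * y ^ b))) by (apply Rmult_le_compat_r; lra).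
    nra. }
  assert (Hsmall : Rabs (line_diff q p c r (INR n) y) <= W0 / 2 * y ^ (k - 1)).
  { assert (Rabs K * 2 <= W0 * y) by (apply Rdiv_le_mult; lra).
    apply (lower_order_le K _ y k); [lia|lra|lra|].
    apply HK; [split; nra|lra]. }
  unfold line_diff in Hsmall. fold x in Hsmall.
  replace (beval q (INR m) y - beval p (INR n) y) with
    ((beval q (INR m) y - beval q x y) + (beval q x y - beval p (INR n) y)) by ring.
  pose proof (Rabs_triang_inv (beval q (INR m) y - beval q x y) (- (beval q x y - beval p (INR n) y))) as T.
  rewrite Rabs_Ropp in T.
  replace (beval q (INR m) y - beval q x y - - (beval q x y - beval p (INR n) y))
    with (beval q (INR m) y - beval q x y + (beval q x y - beval p (INR n) y)) in T by ring.
  lra.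
Qed.

(** * Polynomial functions of one real variable *)

Fixpoint poly_fun (d : nat) (f : R -> R) : Prop :=
  match d with
  | O => forall x, f x = f 0
  | S d => exists g, poly_fun d g /\ forall x, f x = f 0 + x * g x
  end.

Lemma poly_fun_ext d : forall f g, (forall x, f x = g x) -> poly_fun d f -> poly_fun d g.
Proof.
  induction d as [|d IH]; simpl; intros f g E H.
  - intros x. rewrite <- !E. apply H.
  - destruct H as [h [Hh Hf]]. exists h. split; [exact Hh|]. intros x. rewrite <- !E. apply Hf.
Qed.

Lemma poly_fun_const d c : poly_fun d (fun _ => c).
Proof.
  revert c. induction d as [|d IH]; intros c; simpl; [intros; reflexivity|].
  exists (fun _ => 0). split; [apply IH|intros; ring].
Qed.

Lemma poly_fun_succ d : forall f, poly_fun d f -> poly_fun (S d) f.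
Proof.
  induction d as [|d IH]; intros f H.
  - exists (fun _ => 0). split; [simpl; intros; reflexivity|]. intros x. rewrite (H x). ring.
  - destruct H as [g [Hg Hf]]. exists g. split; [apply IH, Hg|exact Hf].
Qed.

Lemma poly_fun_le d e f : (d <= e)%nat -> poly_fun d f -> poly_fun e f.
Proof. intros Hde. induction Hde; auto. intros H. apply poly_fun_succ; auto. Qed.

Lemma poly_fun_add d : forall f g, poly_fun d f -> poly_fun d g -> poly_fun d (fun x => f x + g x).
Proof.
  induction d as [|d IH]; simpl; intros f g Hf Hg.
  - intros x. rewrite Hf, Hg. reflexivity.
  - destruct Hf as [f1 [Hf1 Ef]]. destruct Hg as [g1 [Hg1 Eg]].
    exists (fun x => f1 x + g1 x). split; [auto|]. intros x. rewrite (Ef x), (Eg x). ring.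
Qed.

Lemma poly_fun_scal d : forall a f, poly_fun d f -> poly_fun d (fun x => a * f x).
Proof.
  induction d as [|d IH]; simpl; intros a f Hf.
  - intros x. rewrite Hf. reflexivity.
  - destruct Hf as [f1 [Hf1 Ef]]. exists (fun x => a * f1 x). split; [auto|].
    intros x. rewrite (Ef x). ring.
Qed.

Lemma poly_fun_mul d : forall e f g, poly_fun d f -> poly_fun e g ->
  poly_fun (d + e) (fun x => f x * g x).
Proof.
  induction d as [|d IH]; intros e f g Hf Hg.
  - apply (poly_fun_ext _ (fun x => f 0 * g x)); [intros x; simpl in Hf; rewrite (Hf x); ring|].
    apply poly_fun_scal, Hg.
  - destruct Hf as [f1 [Hf1 Ef]].
    apply (poly_fun_ext _ (fun x => f 0 * g x + x * (f1 x * g x))); [intros x; rewrite (Ef x); ring|].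
    apply poly_fun_add.
    + apply poly_fun_scal. apply (poly_fun_le e); [lia|exact Hg].
    + exists (fun x => f1 x * g x). split; [apply IH; auto|intros; ring].
Qed.

Lemma poly_fun_pow_affine a al be : poly_fun a (fun x => (al * x + be) ^ a).
Proof.
  induction a as [|a IH]; [simpl; intros; reflexivity|].
  apply (poly_fun_ext _ (fun x => (al * x + be) * (al * x + be) ^ a)); [intros; simpl; ring|].
  apply (poly_fun_mul 1 a); [|exact IH].
  exists (fun _ => al). split; [simpl; intros; reflexivity|intros; ring].
Qed.

Lemma poly_fun_factor d : forall f, poly_fun (S d) f -> forall a,
  exists g, poly_fun d g /\ forall x, f x - f a = (x - a) * g x.
Proof.
  induction d as [|d IH]; intros f [g [Hg Ef]] a.
  - exists g. split; [exact Hg|]. intros x. rewrite (Ef x), (Ef a), (Hg x), (Hg a). ring.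
  - destruct (IH g Hg a) as [h [Hh Eh]].
    exists (fun x => g x + a * h x). split.
    + apply poly_fun_add; [exact Hg|]. apply poly_fun_succ, poly_fun_scal, Hh.
    + intros x. rewrite (Ef x), (Ef a).
      replace (f 0 + x * g x - (f 0 + a * g a)) with ((x - a) * g x + a * (g x - g a)) by ring.
      rewrite Eh. ring.
Qed.

Lemma poly_fun_roots d : forall f l, poly_fun d f -> NoDup l -> (S d <= length l)%nat ->
  (forall x, In x l -> f x = 0) -> forall x, f x = 0.
Proof.
  induction d as [|d IH]; intros f l Hf Hl Hlen Hz x.
  - destruct l as [|a l]; [simpl in Hlen; lia|]. simpl in Hf.
    rewrite Hf, <- (Hf a). apply Hz; left; reflexivity.
  - destruct l as [|a l]; [simpl in Hlen; lia|].
    destruct (poly_fun_factor d f Hf a) as [g [Hg Eg]].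
    inversion Hl; subst.
    assert (Hg0 : forall x, g x = 0).
    { apply (IH g l Hg); [assumption|simpl in Hlen; lia|]. intros y Hy.
      assert (y - a <> 0) by (intros E; apply H1; replace y with a in Hy by lra; exact Hy).
      pose proof (Eg y) as E. rewrite (Hz y (or_intror Hy)), (Hz a (or_introl eq_refl)) in E.
      apply (Rmult_eq_reg_l (y - a)); [lra|assumption]. }
    pose proof (Eg x) as E. rewrite Hg0, (Hz a (or_introl eq_refl)) in E. lra.
Qed.

Lemma poly_fun_eventually_away d : forall g, poly_fun d g -> (exists x, g x <> 0) ->
  exists C Y, 0 < C /\ forall y, Y <= y -> C <= Rabs (g y).
Proof.
  induction d as [|d IH]; intros g Hg [x0 Hx0].
  - simpl in Hg. exists (Rabs (g 0)), 0. rewrite Hg in Hx0. split.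
    + apply Rabs_pos_lt, Hx0.
    + intros y _. rewrite (Hg y). lra.
  - destruct Hg as [h [Hh Eg]].
    destruct (classic (exists x, h x <> 0)) as [Hne|Hz].
    + destruct (IH h Hh Hne) as [C [Y [HC HY]]].
      set (Y' := Rmax 1 (Rmax Y ((Rabs (g 0) + C) / C))).
      exists C, Y'. split; [exact HC|]. intros y Hy.
      pose proof (Rmax_l 1 (Rmax Y ((Rabs (g 0) + C) / C))) as M1.
      pose proof (Rmax_r 1 (Rmax Y ((Rabs (g 0) + C) / C))) as M2.
      pose proof (Rmax_l Y ((Rabs (g 0) + C) / C)) as M3.
      pose proof (Rmax_r Y ((Rabs (g 0) + C) / C)) as M4.
      fold Y' in M1, M2.
      assert (H1 : 1 <= y) by lra. assert (H2 : Y <= y) by lra.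
      assert (H3 : (Rabs (g 0) + C) / C <= y) by lra.
      specialize (HY y H2). apply Rdiv_le_mult in H3; [|exact HC].
      rewrite (Eg y). pose proof (Rabs_triang_inv (y * h y) (- g 0)) as T.
      rewrite Rabs_Ropp, Rabs_mult, (Rabs_right y) in T by lra.
      replace (y * h y - - g 0) with (g 0 + y * h y) in T by ring. nra.
    + assert (forall x, h x = 0) as Hh0 by (intros x; apply NNPP; intros N; apply Hz; exists x; exact N).
      exists (Rabs (g 0)), 0. rewrite (Eg x0), Hh0, Rmult_0_r, Rplus_0_r in Hx0. split.
      * apply Rabs_pos_lt, Hx0.
      * intros y _. rewrite (Eg y), Hh0, Rmult_0_r, Rplus_0_r. lra.
Qed.

Lemma beval_poly_affine k q al be ga de : deg_bounded k q ->
  poly_fun k (fun t => beval q (al * t + be) (ga * t + de)).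
Proof.
  induction q as [|[[co a] b] q IH]; intros Hd; [apply (poly_fun_const k 0)|].
  change (poly_fun k (fun t => INR co * (al * t + be) ^ a * (ga * t + de) ^ b
                               + beval q (al * t + be) (ga * t + de))).
  apply poly_fun_add; [|apply IH, (deg_bounded_tail _ _ _ Hd)].
  destruct (Nat.le_gt_cases (a + b) k) as [L|L].
  - apply (poly_fun_ext _ (fun t => INR co * ((al * t + be) ^ a * (ga * t + de) ^ b))); [intros; ring|].
    apply poly_fun_scal, (poly_fun_le (a + b)); [exact L|].
    apply poly_fun_mul; apply poly_fun_pow_affine.
  - rewrite (Hd co a b (or_introl eq_refl) L).
    apply (poly_fun_ext _ (fun _ => 0)); [intros; simpl; ring|]. apply poly_fun_const.
Qed.

(** * Integers n for which c n + r is close to an integer *)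

Definition Rltb (x y : R) : bool := if Rlt_dec x y then true else false.

Lemma Rltb_true x y : Rltb x y = true <-> x < y.
Proof. unfold Rltb. destruct (Rlt_dec x y); split; intros; auto; try discriminate; contradiction. Qed.

Lemma Rltb_false x y : Rltb x y = false <-> ~ x < y.
Proof. unfold Rltb. destruct (Rlt_dec x y); split; intros; auto; try discriminate; contradiction. Qed.

Lemma filter_all_false {A} (f : A -> bool) l : (forall x, In x l -> f x = false) -> filter f l = nil.
Proof.
  induction l as [|a l IH]; simpl; intros H; [reflexivity|].
  rewrite (H a (or_introl eq_refl)). apply IH. intros; apply H; right; assumption.
Qed.

Section SparseCount.
Variable bad : nat -> bool.
Variable L : nat.
Hypothesis HL : (1 <= L)%nat.
Hypothesis Hgap : forall n1 n2, bad n1 = true -> bad n2 = true -> (n1 < n2)%nat -> (L <= n2 - n1)%nat.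

Definition count_upto (N : nat) : nat := length (filter bad (seq 1 N)).

Lemma count_upto_S N : count_upto (S N) = (count_upto N + if bad (S N) then 1 else 0)%nat.
Proof.
  unfold count_upto. rewrite seq_S, filter_app, length_app. simpl.
  replace (1 + N)%nat with (S N) by lia. destruct (bad (S N)); simpl; lia.
Qed.

Lemma count_upto_window N t : (t <= L)%nat ->
  count_upto (N + t) = count_upto N \/
  (count_upto (N + t) = S (count_upto N) /\ exists b, (N < b <= N + t)%nat /\ bad b = true).
Proof.
  induction t as [|t IH]; intros Ht.
  - left. f_equal. lia.
  - replace (N + S t)%nat with (S (N + t)) by lia. rewrite count_upto_S.
    destruct (bad (S (N + t))) eqn:Eb.
    + destruct (IH ltac:(lia)) as [E|[E [b [Hb Hbb]]]].
      * right. split; [lia|]. exists (S (N + t)). split; [lia|exact Eb].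
      * exfalso. pose proof (Hgap b (S (N + t)) Hbb Eb ltac:(lia)). lia.
    + rewrite Nat.add_0_r. destruct (IH ltac:(lia)) as [E|[E [b [Hb Hbb]]]]; [left; exact E|].
      right. split; [exact E|]. exists b. split; [lia|exact Hbb].
Qed.

Lemma count_upto_blocks j N : (N <= j * L)%nat -> (count_upto N <= S j)%nat.
Proof.
  revert N. induction j as [|j IH]; intros N HN.
  - simpl in HN. replace N with 0%nat by lia. unfold count_upto. simpl. lia.
  - destruct (Nat.le_gt_cases N (j * L)) as [H|H]; [specialize (IH N H); lia|].
    replace N with (j * L + (N - j * L))%nat by lia.
    destruct (count_upto_window (j * L) (N - j * L) ltac:(simpl in HN; lia)) as [E|[E _]];
      rewrite E; specialize (IH (j * L)%nat (le_n _)); lia.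
Qed.

Lemma count_upto_sparse N : INR (count_upto N) <= INR N / INR L + 2.
Proof.
  assert (HLr : 0 < INR L) by (apply lt_0_INR; lia).
  assert (H : (N <= (N / L + 1) * L)%nat).
  { pose proof (Nat.div_mod N L ltac:(lia)). pose proof (Nat.mod_upper_bound N L ltac:(lia)). nia. }
  pose proof (count_upto_blocks _ _ H) as Hc.
  apply le_INR in Hc. rewrite S_INR, plus_INR in Hc. simpl in Hc.
  assert (INR (N / L) * INR L <= INR N).
  { rewrite <- mult_INR. apply le_INR. rewrite Nat.mul_comm. apply Nat.Div0.mul_div_le. }
  assert (INR (N / L) <= INR N / INR L).
  { apply (Rmult_le_reg_r (INR L)); [exact HLr|]. unfold Rdiv. rewrite Rmult_assoc, Rinv_l by lra. lra. }
  lra.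
Qed.
End SparseCount.

Definition near_int (eps x : R) : bool :=
  orb (Rltb (x - IZR (Int_part x)) eps) (Rltb (1 - eps) (x - IZR (Int_part x))).

Lemma not_near_int_far eps x : near_int eps x = false -> forall z : Z, eps <= Rabs (IZR z - x).
Proof.
  unfold near_int. intros H z. apply orb_false_iff in H. destruct H as [H1 H2].
  apply Rltb_false in H1. apply Rltb_false in H2.
  pose proof (base_Int_part x) as [B1 B2].
  destruct (Z_le_gt_dec z (Int_part x)) as [Hz|Hz].
  - apply IZR_le in Hz. rewrite Rabs_left1 by lra. lra.
  - assert (IZR (Int_part x) + 1 <= IZR z) by (rewrite <- plus_IZR; apply IZR_le; lia).
    rewrite Rabs_right by lra. lra.
Qed.

Lemma near_int_close eps x : 0 < eps -> near_int eps x = true -> exists z : Z, Rabs (x - IZR z) < eps.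
Proof.
  unfold near_int. intros He H. apply orb_true_iff in H. pose proof (base_Int_part x) as [B1 B2].
  destruct H as [H|H]; apply Rltb_true in H.
  - exists (Int_part x). rewrite Rabs_right by lra. lra.
  - exists (Int_part x + 1)%Z. rewrite plus_IZR, Rabs_left1 by lra. lra.
Qed.

Lemma nonint_dist x : (forall z : Z, x <> IZR z) ->
  exists eps, 0 < eps /\ forall z : Z, eps <= Rabs (x - IZR z).
Proof.
  intros H. pose proof (base_Int_part x) as [B1 B2].
  assert (Hne : x <> IZR (Int_part x)) by apply H.
  set (fr := x - IZR (Int_part x)).
  exists (Rmin fr (1 - fr)). split; [apply Rmin_glb_lt; unfold fr; lra|].
  intros z. pose proof (Rmin_l fr (1 - fr)). pose proof (Rmin_r fr (1 - fr)).
  destruct (Z_le_gt_dec z (Int_part x)) as [Hz|Hz].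
  - apply IZR_le in Hz. rewrite Rabs_right by lra. unfold fr in *. lra.
  - assert (IZR (Int_part x) + 1 <= IZR z) by (rewrite <- plus_IZR; apply IZR_le; lia).
    rewrite Rabs_left1 by lra. unfold fr in *. lra.
Qed.

Lemma finite_nonint_dist (f : nat -> R) L : (forall j, (j < L)%nat -> forall z : Z, f j <> IZR z) ->
  exists eps, 0 < eps /\ forall j, (j < L)%nat -> forall z : Z, eps <= Rabs (f j - IZR z).
Proof.
  induction L as [|L IH]; intros H.
  - exists 1. split; [lra|]. intros; lia.
  - destruct IH as [e1 [He1 H1]]; [intros; apply H; lia|].
    destruct (nonint_dist (f L) (H L ltac:(lia))) as [e2 [He2 H2]].
    exists (Rmin e1 e2). split; [apply Rmin_glb_lt; assumption|].
    intros j Hj z. pose proof (Rmin_l e1 e2). pose proof (Rmin_r e1 e2).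
    destruct (Nat.eq_dec j L) as [E|E].
    + subst. specialize (H2 z). lra.
    + specialize (H1 j ltac:(lia) z). lra.
Qed.

Lemma Q2R_frac (z : Z) (d : positive) : Q2R (Qmake z d) = IZR z / IZR (Zpos d).
Proof. reflexivity. Qed.

Definition is_rational (x : R) : Prop := exists qx : Q, x = Q2R qx.

(* Rational slope, irrational offset: the fractional part of c n + r ranges over finitely
   many non-zero values, so c n + r is uniformly away from Z. *)
Lemma rational_slope_far_from_Z c r : is_rational c -> ~ is_rational r ->
  exists eps, 0 < eps /\ forall n : nat, near_int eps (c * INR n + r) = false.
Proof.
  intros [[num den] Hc] Hr. rewrite Q2R_frac in Hc.
  set (D := IZR (Zpos den)). assert (HD : 0 < D) by (unfold D; apply IZR_lt; lia).
  destruct (finite_nonint_dist (fun i => INR i / D + r) (Pos.to_nat den)) as [eps [He Heps]].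
  { intros j Hj z E. apply Hr. exists (Qmake (z * Zpos den - Z.of_nat j) den).
    rewrite Q2R_frac, minus_IZR, mult_IZR, <- INR_IZR_INZ. fold D.
    replace r with (IZR z - INR j / D) by lra. field. lra. }
  exists eps. split; [exact He|]. intros n.
  destruct (near_int eps (c * INR n + r)) eqn:Eb; [exfalso|reflexivity].
  destruct (near_int_close _ _ He Eb) as [z Hz].
  set (M := (num * Z.of_nat n)%Z).
  pose proof (Z.div_mod M (Zpos den) ltac:(lia)) as HM.
  pose proof (Z.mod_pos_bound M (Zpos den) ltac:(lia)) as HMb.
  set (i := Z.to_nat (M mod Zpos den)).
  specialize (Heps i ltac:(unfold i; lia) (z - M / Zpos den)%Z).
  assert (E : c * INR n + r - IZR z = INR i / D + r - IZR (z - M / Zpos den)).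
  { rewrite Hc, minus_IZR. unfold i. rewrite (INR_IZR_INZ (Z.to_nat _)), Z2Nat.id by lia.
    assert (IZR M = D * IZR (M / Zpos den) + IZR (M mod Zpos den)).
    { unfold D. rewrite <- mult_IZR, <- plus_IZR. f_equal. exact HM. }
    assert (IZR M = IZR num * INR n) by (unfold M; rewrite mult_IZR, INR_IZR_INZ; reflexivity).
    fold D. apply (Rmult_eq_reg_l D); [|lra]. field_simplify; [nra|lra|lra]. }
  rewrite <- E in Heps. lra.
Qed.

(* Irrational slope: j c (1 <= j <= L) stays eps away from Z, so two integers n1 < n2 with
   c n_i + r within eps/2 of Z satisfy n2 - n1 > L; hence at most N / L + 2 of them. *)
Lemma irrational_slope_rarely_near_Z c r : ~ is_rational c ->
  forall delta, 0 < delta -> exists eps, 0 < eps /\ exists N1 : nat, forall N : nat, (N1 < N)%nat ->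
    INR (length (filter (fun n => near_int eps (c * INR n + r)) (seq 1 N))) <= delta * INR N.
Proof.
  intros Hc delta Hd.
  destruct (large_N (4 / delta)) as [L0 HL0].
  set (L := S L0). assert (HLd : 4 / delta < INR L) by (apply HL0; unfold L; lia).
  destruct (finite_nonint_dist (fun j => INR (S j) * c) L) as [e [He Heps]].
  { intros j Hj z E. apply Hc. exists (Qmake z (Pos.of_succ_nat j)).
    rewrite Q2R_frac, Zpos_P_of_succ_nat, <- Nat2Z.inj_succ, <- INR_IZR_INZ.
    assert (0 < INR (S j)) by (apply lt_0_INR; lia). rewrite <- E. field. lra. }
  exists (e / 2). split; [lra|].
  destruct (large_N (8 / delta)) as [N1 HN1]. exists N1. intros N HN. specialize (HN1 N HN).
  set (bad := fun n => near_int (e / 2) (c * INR n + r)).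
  assert (Hgap : forall n1 n2, bad n1 = true -> bad n2 = true -> (n1 < n2)%nat -> (L <= n2 - n1)%nat).
  { intros n1 n2 B1 B2 Hlt. destruct (Nat.le_gt_cases L (n2 - n1)) as [G|G]; [exact G|exfalso].
    destruct (near_int_close (e / 2) _ ltac:(lra) B1) as [z1 Hz1].
    destruct (near_int_close (e / 2) _ ltac:(lra) B2) as [z2 Hz2].
    specialize (Heps (n2 - n1 - 1)%nat ltac:(lia) (z2 - z1)%Z).
    replace (INR (S (n2 - n1 - 1))) with (INR n2 - INR n1) in Heps
      by (rewrite <- minus_INR by lia; f_equal; lia).
    rewrite minus_IZR in Heps.
    replace ((INR n2 - INR n1) * c - (IZR z2 - IZR z1)) with
      ((c * INR n2 + r - IZR z2) + - (c * INR n1 + r - IZR z1)) in Heps by ring.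
    pose proof (Rabs_triang (c * INR n2 + r - IZR z2) (- (c * INR n1 + r - IZR z1))) as T.
    rewrite Rabs_Ropp in T. lra. }
  pose proof (count_upto_sparse bad L ltac:(unfold L; lia) Hgap N) as Hc1. unfold count_upto in Hc1.
  assert (HLp : 0 < INR L) by (apply lt_0_INR; unfold L; lia).
  assert (8 <= delta * INR N) by (apply Rdiv_le_mult; lra).
  assert (INR N / INR L <= delta / 4 * INR N).
  { assert (4 <= delta * INR L) by (apply Rdiv_le_mult; lra).
    apply (Rmult_le_reg_r (INR L)); [exact HLp|]. unfold Rdiv. rewrite Rmult_assoc, Rinv_l by lra. nra. }
  fold bad. lra.
Qed.

Lemma not_both_rational_rarely_near_Z c r : ~ (is_rational c /\ is_rational r) ->
  forall delta, 0 < delta -> exists eps, 0 < eps /\ exists N1 : nat, forall N : nat, (N1 < N)%nat ->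
    INR (length (filter (fun n => near_int eps (c * INR n + r)) (seq 1 N))) <= delta * INR N.
Proof.
  intros Hnr delta Hd.
  destruct (classic (is_rational c)) as [Hc|Hc].
  - assert (Hr : ~ is_rational r) by (intros Hr; apply Hnr; split; assumption).
    destruct (rational_slope_far_from_Z c r Hc Hr) as [eps [He Hfar]].
    exists eps. split; [exact He|]. exists 0%nat. intros N _.
    rewrite filter_all_false by (intros n _; apply Hfar). simpl.
    apply Rmult_le_pos; [lra|apply pos_INR].
  - exact (irrational_slope_rarely_near_Z c r Hc delta Hd).
Qed.

(** * Rational c and r: integrality and spacing *)

Definition is_int (x : R) : Prop := exists z : Z, x = IZR z.

Lemma is_int_add x y : is_int x -> is_int y -> is_int (x + y).
Proof. intros [a Ha] [b Hb]. exists (a + b)%Z. rewrite plus_IZR. subst; reflexivity. Qed.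

Lemma is_int_mul x y : is_int x -> is_int y -> is_int (x * y).
Proof. intros [a Ha] [b Hb]. exists (a * b)%Z. rewrite mult_IZR. subst; reflexivity. Qed.

Lemma is_int_pow x n : is_int x -> is_int (x ^ n).
Proof. intros H. induction n; simpl; [exists 1%Z; reflexivity|apply is_int_mul; assumption]. Qed.

Lemma is_int_IZR z : is_int (IZR z).
Proof. exists z; reflexivity. Qed.

Lemma is_int_INR n : is_int (INR n).
Proof. exists (Z.of_nat n). apply INR_IZR_INZ. Qed.

Lemma is_int_abs_ge1 x : is_int x -> x <> 0 -> 1 <= Rabs x.
Proof.
  intros [z Hz] H. subst. rewrite <- abs_IZR. apply IZR_le.
  assert (z <> 0%Z) by (intros E; subst; apply H; reflexivity). lia.
Qed.

Lemma beval_int q X Y : is_int X -> is_int Y -> is_int (beval q X Y).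
Proof.
  intros HX HY. induction q as [|[[co a] b] q IH]; simpl; [apply (is_int_IZR 0)|].
  apply is_int_add; [|exact IH]. repeat apply is_int_mul; try apply is_int_pow; auto. apply is_int_INR.
Qed.

Lemma beval_int_scaled k q (t e Y : Z) : deg_bounded k q -> IZR e <> 0 ->
  is_int (IZR e ^ k * beval q (IZR t / IZR e) (IZR Y)).
Proof.
  intros Hd He. induction q as [|[[co a] b] q IH]; simpl.
  { rewrite Rmult_0_r. apply (is_int_IZR 0). }
  rewrite Rmult_plus_distr_l. apply is_int_add; [|apply IH, (deg_bounded_tail _ _ _ Hd)].
  destruct (Nat.le_gt_cases (a + b) k) as [L|L].
  - replace (IZR e ^ k * (INR co * (IZR t / IZR e) ^ a * IZR Y ^ b))
      with (INR co * IZR t ^ a * IZR e ^ (k - a) * IZR Y ^ b).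
    + repeat apply is_int_mul; try apply is_int_pow; try apply is_int_INR; apply is_int_IZR.
    + replace k with (a + (k - a))%nat at 2 by lia. rewrite pow_add.
      unfold Rdiv. rewrite Rpow_mult_distr, pow_inv. field. apply pow_nonzero, He.
  - rewrite (Hd co a b (or_introl eq_refl) L). simpl. rewrite !Rmult_0_l, Rmult_0_r. apply (is_int_IZR 0).
Qed.

Lemma rational_line_arithmetic q p k c r : deg_bounded k q -> deg_bounded k p ->
  is_rational c -> is_rational r ->
  exists e, 0 < e /\
    (forall n m : nat, INR m <> c * INR n + r -> 1 / e <= Rabs (INR m - (c * INR n + r))) /\
    (forall n N : nat, is_int (e ^ k * line_diff q p c r (INR n) (INR N))).
Proof.
  intros Hq Hp [[nc dc] Hc] [[nr dr] Hr]. rewrite Q2R_frac in Hc, Hr.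
  set (e := (Zpos dc * Zpos dr)%Z). exists (IZR e).
  assert (He : 0 < IZR e) by (apply IZR_lt; unfold e; lia).
  assert (Hline : forall n : nat, c * INR n + r = IZR (nc * Zpos dr * Z.of_nat n + nr * Zpos dc) / IZR e).
  { intros n. rewrite Hc, Hr. unfold e. rewrite plus_IZR, !mult_IZR, <- INR_IZR_INZ.
    assert (0 < IZR (Zpos dc)) by (apply IZR_lt; lia).
    assert (0 < IZR (Zpos dr)) by (apply IZR_lt; lia).
    field. lra. }
  split; [exact He|split].
  - intros n m Hm. rewrite Hline in *. set (T := (nc * Zpos dr * Z.of_nat n + nr * Zpos dc)%Z) in *.
    assert (Hi : is_int (IZR e * (INR m - IZR T / IZR e))).
    { replace (IZR e * (INR m - IZR T / IZR e)) with (IZR e * INR m + IZR (- T)) by (rewrite opp_IZR; field; lra).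
      apply is_int_add; [apply is_int_mul; [apply is_int_IZR|apply is_int_INR]|apply is_int_IZR]. }
    assert (Hnz : IZR e * (INR m - IZR T / IZR e) <> 0).
    { intros E. apply Rmult_integral in E. destruct E; [lra|]. apply Hm. lra. }
    pose proof (is_int_abs_ge1 _ Hi Hnz) as H1. rewrite Rabs_mult, (Rabs_right (IZR e)) in H1 by lra.
    apply (Rmult_le_reg_l (IZR e)); [exact He|].
    replace (IZR e * (1 / IZR e)) with 1 by (field; lra). exact H1.
  - intros n N. unfold line_diff. rewrite Hline, Rmult_minus_distr_l, (INR_IZR_INZ N).
    apply is_int_add; [apply beval_int_scaled; [exact Hq|lra]|].
    replace (- (IZR e ^ k * beval p (INR n) (IZR (Z.of_nat N))))
      with (IZR (-1) * IZR e ^ k * beval p (INR n) (IZR (Z.of_nat N))) by (simpl; ring).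
    repeat apply is_int_mul; try apply is_int_pow; try apply is_int_IZR.
    apply beval_int; [apply is_int_INR|apply is_int_IZR].
Qed.

(** * Few small values of a nonconstant polynomial with values in (1/B) Z *)

Section Fibres.
Variable val : nat -> Z.

Definition fibre_sum (l : list nat) (zs : list Z) : nat :=
  fold_right (fun z acc => (length (filter (fun n => Z.eqb (val n) z) l) + acc)%nat) 0%nat zs.

Lemma fibre_sum_cons n l zs :
  fibre_sum (n :: l) zs = (fibre_sum l zs + length (filter (fun z => Z.eqb (val n) z) zs))%nat.
Proof.
  induction zs as [|z zs IH]; simpl; [reflexivity|]. rewrite IH.
  destruct (Z.eqb (val n) z); simpl; lia.
Qed.

Lemma in_filter_eqb v zs : In v zs -> (1 <= length (filter (fun z => Z.eqb v z) zs))%nat.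
Proof.
  induction zs as [|z zs IH]; simpl; intros H; [contradiction|].
  destruct H as [E|H].
  - subst. rewrite Z.eqb_refl. simpl. lia.
  - destruct (Z.eqb v z); simpl; [lia|auto].
Qed.

Lemma count_by_fibres (P : nat -> bool) l zs k :
  (forall n, In n l -> P n = true -> In (val n) zs) ->
  (forall z, (length (filter (fun n => Z.eqb (val n) z) l) <= k)%nat) ->
  (length (filter P l) <= k * length zs)%nat.
Proof.
  intros Hin Hfib.
  assert (Hsum : (fibre_sum l zs <= k * length zs)%nat).
  { clear Hin. induction zs as [|z zs IH]; simpl; [lia|]. specialize (Hfib z). lia. }
  enough (length (filter P l) <= fibre_sum l zs)%nat by lia.
  clear Hsum Hfib. induction l as [|n l IH]; simpl; [lia|].
  rewrite fibre_sum_cons. specialize (IH (fun m Hm => Hin m (or_intror Hm))).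
  destruct (P n) eqn:E; simpl; [|lia].
  pose proof (in_filter_eqb _ _ (Hin n (or_introl eq_refl) E)). lia.
Qed.
End Fibres.

Lemma int_range_in (Mz : nat) (v : Z) : (- Z.of_nat Mz <= v <= Z.of_nat Mz)%Z ->
  In v (map (fun i => (Z.of_nat i - Z.of_nat Mz)%Z) (seq 0 (2 * Mz + 1))).
Proof.
  intros H. apply in_map_iff. exists (Z.to_nat (v + Z.of_nat Mz)). split; [lia|].
  apply in_seq. lia.
Qed.

Lemma poly_fun_level_set k g l v : poly_fun k g -> (exists x, g x <> g 0) -> NoDup l ->
  (forall n, In n l -> g (INR n) = v) -> (length l <= k)%nat.
Proof.
  intros Hg [x Hx] Hl Hv.
  destruct (Nat.le_gt_cases (length l) k) as [G|G]; [exact G|exfalso].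
  assert (Hz : forall y, g y - v = 0).
  { apply (poly_fun_roots k (fun y => g y - v) (map INR l)).
    - apply (poly_fun_ext _ (fun y => g y + - v)); [intros; ring|].
      apply poly_fun_add; [exact Hg|apply poly_fun_const].
    - apply NoDup_map_NoDup_ForallPairs; [|exact Hl]. intros a b _ _ E. apply INR_eq, E.
    - rewrite length_map. lia.
    - intros y Hy. apply in_map_iff in Hy. destruct Hy as [n [En Hn]]. subst y.
      rewrite (Hv n Hn). ring. }
  apply Hx. pose proof (Hz x). pose proof (Hz 0). lra.
Qed.

(* If B g(n) is an integer for all n, the values B g(n) with |g(n)| < X lie in an integer
   range of length 2 B X + 3, each taken at most k times. *)
Lemma poly_fun_small_values k g (B X : R) (N : nat) :
  poly_fun k g -> (exists x, g x <> g 0) -> 0 < B -> 0 <= X ->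
  (forall n : nat, is_int (B * g (INR n))) ->
  INR (length (filter (fun n => Rltb (Rabs (g (INR n))) X) (seq 1 N))) <= INR k * (2 * (B * X) + 3).
Proof.
  intros Hg Hnc HB HX Hint.
  set (val := fun n => Int_part (B * g (INR n))).
  assert (Hval : forall n, IZR (val n) = B * g (INR n)).
  { intros n. destruct (Hint n) as [z Hz]. unfold val. rewrite Hz.
    rewrite <- (Int_part_spec (IZR z) z); [reflexivity|lra]. }
  pose proof (archimed (B * X)) as [A1 A2].
  set (Mz := Z.to_nat (up (B * X))).
  assert (HMz : INR Mz <= B * X + 1).
  { assert (0 <= B * X) by (apply Rmult_le_pos; lra).
    unfold Mz. rewrite INR_IZR_INZ, Z2Nat.id; [lra|]. apply le_IZR. simpl. lra. }
  set (zs := map (fun i => (Z.of_nat i - Z.of_nat Mz)%Z) (seq 0 (2 * Mz + 1))).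
  assert (Hzs : length zs = (2 * Mz + 1)%nat) by (unfold zs; rewrite length_map, length_seq; reflexivity).
  assert (Hin : forall n, In n (seq 1 N) -> Rltb (Rabs (g (INR n))) X = true -> In (val n) zs).
  { intros n _ Hlt. apply Rltb_true in Hlt. apply int_range_in.
    assert (Rabs (IZR (val n)) < B * X)
      by (rewrite Hval, Rabs_mult, (Rabs_right B) by lra; apply Rmult_lt_compat_l; assumption).
    rewrite <- abs_IZR in H.
    assert (IZR (Z.abs (val n)) < IZR (up (B * X))) by lra. apply lt_IZR in H0.
    unfold Mz. lia. }
  assert (Hfib : forall z, (length (filter (fun n => Z.eqb (val n) z) (seq 1 N)) <= k)%nat).
  { intros z. apply (poly_fun_level_set k g _ (IZR z / B) Hg Hnc).
    - apply NoDup_filter, seq_NoDup.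
    - intros n Hn. apply filter_In in Hn. destruct Hn as [_ Hn]. apply Z.eqb_eq in Hn.
      pose proof (Hval n) as E. rewrite Hn in E. rewrite E. field. lra. }
  pose proof (count_by_fibres val _ (seq 1 N) zs k Hin Hfib) as Hc.
  rewrite Hzs in Hc. apply le_INR in Hc. rewrite mult_INR, plus_INR, mult_INR in Hc. simpl in Hc.
  assert (0 <= INR k) by apply pos_INR.
  assert (INR k * (2 * INR Mz + 1) <= INR k * (2 * (B * X) + 3)) by (apply Rmult_le_compat_l; lra).
  lra.
Qed.

Lemma exploding_intro (q p : bipoly) :
  (forall delta, 0 < delta < 1 -> exists C, 0 < C /\ exists (Nd : nat) (bad : nat -> nat -> bool),
     (forall N, (Nd < N)%nat -> INR (length (filter (bad N) (seq 1 N))) <= delta * INR N) /\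
     (forall N, (Nd < N)%nat -> forall n : nat, delta * INR N <= INR n <= INR N -> bad N n = false ->
        forall m : nat, delta * INR N <= INR m <= INR N ->
        C * INR N <= Rabs (beval q (INR m) (INR N) - beval p (INR n) (INR N)))) ->
  exploding_differences q p.
Proof.
  intros H delta Hd. destruct (H delta Hd) as [C [HC [Nd [bad [Hcnt Hfar]]]]].
  exists C, Nd, (fun N => if Nat.leb N Nd then nil else filter (bad N) (seq 1 N)).
  split; [exact HC|split].
  - intros N. destruct (Nat.leb N Nd) eqn:E.
    + split; [constructor|]. simpl. apply Rmult_le_pos; [lra|apply pos_INR].
    + apply Nat.leb_gt in E. split; [|apply Hcnt, E].
      apply Forall_forall. intros g Hg. apply filter_In in Hg. destruct Hg as [Hg _].
      apply in_seq in Hg. lia.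
  - intros N HN n Hn Hni m Hm. apply Rle_ge.
    rewrite (proj2 (Nat.leb_gt N Nd) HN) in Hni.
    apply (Hfar N HN n Hn); [|exact Hm].
    destruct (bad N n) eqn:Eb; [exfalso|reflexivity]. apply Hni, filter_In. split; [|exact Eb].
    apply in_seq.
    assert (0 < INR N) by (apply lt_0_INR; lia).
    assert (n <> 0%nat) by (intros E0; subst; simpl in *; nra).
    assert (n <= N)%nat by (apply INR_le; lra). lia.
Qed.

(* N <= N^(k-1) for N >= 1 and k >= 2: the gap N^(k-1) dominates linear bounds. *)
Lemma le_pow_pred (y : R) (k : nat) : 1 <= y -> (2 <= k)%nat -> y <= y ^ (k - 1).
Proof. intros Hy Hk. pattern y at 1. rewrite <- pow_1. apply Rle_pow; [lra|lia]. Qed.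

Lemma one_le_INR_gt (N1 N : nat) : (N1 < N)%nat -> 1 <= INR N.
Proof. intros H. apply (le_INR 1). lia. Qed.

Definition off_line_gap (q p : bipoly) (k : nat) (c r : R) : Prop :=
  forall delta, 0 < delta < 1 -> exists W, 0 < W /\ exists N1 : nat, forall N : nat, (N1 < N)%nat ->
    forall n : nat, delta * INR N <= INR n <= INR N -> forall m : nat,
      INR m <> c * INR n + r ->
      W * INR N ^ (k - 1) <= Rabs (beval q (INR m) (INR N) - beval p (INR n) (INR N)).

Lemma exploding_of_line_bound q p k c r : (2 <= k)%nat -> off_line_gap q p k c r ->
  (forall delta, 0 < delta < 1 -> exists C, 0 < C /\ exists (Nd : nat) (bad : nat -> nat -> bool),
     (forall N, (Nd < N)%nat -> INR (length (filter (bad N) (seq 1 N))) <= delta * INR N) /\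
     (forall N, (Nd < N)%nat -> forall n : nat, delta * INR N <= INR n <= INR N -> bad N n = false ->
        C * INR N <= Rabs (line_diff q p c r (INR n) (INR N)))) ->
  exploding_differences q p.
Proof.
  intros Hk Hgap Hline. apply exploding_intro. intros delta Hd.
  destruct (Hgap delta Hd) as [W [HW [N1 HN1]]].
  destruct (Hline delta Hd) as [C [HC [Nd [bad [Hcnt Hon]]]]].
  exists (Rmin C W). split; [apply Rmin_glb_lt; assumption|].
  exists (max Nd N1), bad. split; [intros N HN; apply Hcnt; lia|].
  intros N HN n Hn Hb m _.
  pose proof (Rmin_l C W). pose proof (Rmin_r C W). pose proof (pos_INR N).
  destruct (Req_dec (INR m) (c * INR n + r)) as [E|E].
  - rewrite E. pose proof (Hon N ltac:(lia) n Hn Hb).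
    assert (Rmin C W * INR N <= C * INR N) by (apply Rmult_le_compat_r; lra). unfold line_diff in *. lra.
  - pose proof (HN1 N ltac:(lia) n Hn m E).
    pose proof (le_pow_pred (INR N) k (one_le_INR_gt N1 N ltac:(lia)) Hk).
    assert (Rmin C W * INR N <= W * INR N) by (apply Rmult_le_compat_r; lra).
    assert (W * INR N <= W * INR N ^ (k - 1)) by (apply Rmult_le_compat_l; lra). lra.
Qed.

(* c or r irrational: exceptional n are those with c n + r near Z; for the others every m is
   at distance >= eps from the line. *)
Lemma exploding_of_irrational q p k c r : (2 <= k)%nat ->
  (forall t, 0 < t -> off_line_bound q p k c r t) -> ~ (is_rational c /\ is_rational r) ->
  exploding_differences q p.
Proof.
  intros Hk Hoff Hnr. apply exploding_intro. intros delta Hd.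
  destruct (not_both_rational_rarely_near_Z c r Hnr delta ltac:(lra)) as [eps [He [N1 HN1]]].
  destruct (Hoff eps He delta Hd) as [W [HW [N2 HN2]]].
  exists W. split; [exact HW|]. exists (max N1 N2), (fun _ n => near_int eps (c * INR n + r)).
  split; [intros N HN; apply HN1; lia|].
  intros N HN n Hn Hb m _.
  pose proof (not_near_int_far _ _ Hb (Z.of_nat m)) as Hf. rewrite <- INR_IZR_INZ in Hf.
  pose proof (HN2 N ltac:(lia) n Hn m Hf).
  pose proof (le_pow_pred (INR N) k (one_le_INR_gt N1 N ltac:(lia)) Hk).
  assert (W * INR N <= W * INR N ^ (k - 1)) by (apply Rmult_le_compat_l; lra). lra.
Qed.

Lemma line_diff_poly_in_x q p k c r y : deg_bounded k q -> deg_bounded k p ->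
  poly_fun k (fun x => line_diff q p c r x y).
Proof.
  intros Hq Hp. unfold line_diff.
  apply (poly_fun_ext _ (fun t => beval q (c * t + r) (0 * t + y) + (-1) * beval p (1 * t + 0) (0 * t + y))).
  { intros t. replace (0 * t + y) with y by ring. replace (1 * t + 0) with t by ring. ring. }
  apply poly_fun_add; [|apply poly_fun_scal]; apply beval_poly_affine; assumption.
Qed.

Lemma line_diff_poly_in_y q p k c r x : deg_bounded k q -> deg_bounded k p ->
  poly_fun k (fun y => line_diff q p c r x y).
Proof.
  intros Hq Hp. unfold line_diff.
  apply (poly_fun_ext _ (fun t => beval q (0 * t + (c * x + r)) (1 * t + 0)
                                  + (-1) * beval p (0 * t + x) (1 * t + 0))).
  { intros t. replace (0 * t + (c * x + r)) with (c * x + r) by ring.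
    replace (0 * t + x) with x by ring. replace (1 * t + 0) with t by ring. ring. }
  apply poly_fun_add; [|apply poly_fun_scal]; apply beval_poly_affine; assumption.
Qed.

(* Case: D(., N) is a nonconstant polynomial for all large N.  With B = e^k, B D(n, N) is an
   integer, so |D(n, N)| < C1 N for at most k (2 B C1 N + 3) <= delta N integers n. *)
Lemma exploding_of_n_dependent q p k c r e : (2 <= k)%nat -> deg_bounded k q -> deg_bounded k p ->
  0 < e -> (forall n N : nat, is_int (e ^ k * line_diff q p c r (INR n) (INR N))) ->
  off_line_gap q p k c r ->
  (exists N0 : nat, forall N : nat, (N0 < N)%nat ->
     exists x, line_diff q p c r x (INR N) <> line_diff q p c r 0 (INR N)) ->
  exploding_differences q p.
Proof.
  intros Hk Hq Hp He Hint Hgap [N0 HN0]. apply (exploding_of_line_bound q p k c r Hk Hgap).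
  intros delta Hd.
  set (B := e ^ k). assert (HB : 0 < B) by (unfold B; apply pow_lt, He).
  assert (Hk0 : 0 <= INR k) by apply pos_INR.
  set (C1 := delta / (4 * (INR k + 1) * B)).
  assert (HC1 : 0 < C1) by (unfold C1; apply Rdiv_lt_0_compat; [lra|]; apply Rmult_lt_0_compat; lra).
  destruct (large_N (6 * INR k / delta)) as [N3 HN3].
  exists C1. split; [exact HC1|].
  exists (max N0 N3), (fun N n => Rltb (Rabs (line_diff q p c r (INR n) (INR N))) (C1 * INR N)).
  split.
  - intros N HN. pose proof (pos_INR N).
    pose proof (poly_fun_small_values k (fun x => line_diff q p c r x (INR N)) B (C1 * INR N) N
      (line_diff_poly_in_x q p k c r (INR N) Hq Hp) (HN0 N ltac:(lia)) HB
      ltac:(apply Rmult_le_pos; lra) (fun n => Hint n N)) as Hc. simpl in Hc.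
    assert (6 * INR k <= delta * INR N) by (apply Rdiv_le_mult; [lra|apply Rlt_le, HN3; lia]).
    assert (E : INR k * (2 * (B * (C1 * INR N))) = delta * INR N / 2 * (INR k / (INR k + 1)))
      by (unfold C1; field; lra).
    assert (INR k / (INR k + 1) <= 1)
      by (apply (Rmult_le_reg_r (INR k + 1)); [lra|]; unfold Rdiv; rewrite Rmult_assoc, Rinv_l by lra; lra).
    assert (0 <= delta * INR N / 2) by nra.
    nra.
  - intros N _ n _ Hb. apply Rltb_false in Hb. lra.
Qed.

Lemma poly_fun_linear_growth d u : poly_fun (S d) u -> (exists y, u y <> u 0) ->
  exists C Y, 0 < C /\ forall y, Y <= y -> C * y <= Rabs (u y).
Proof.
  intros [g [Hg Eu]] [y1 Hy1].
  destruct (poly_fun_eventually_away d g Hg) as [C0 [Y [HC0 HY]]].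
  { exists y1. intros E. apply Hy1. rewrite (Eu y1), E. ring. }
  set (Y' := Rmax 0 (Rmax Y (2 * Rabs (u 0) / C0))).
  exists (C0 / 2), Y'. split; [lra|]. intros y Hy.
  pose proof (Rmax_l 0 (Rmax Y (2 * Rabs (u 0) / C0))) as M1.
  pose proof (Rmax_r 0 (Rmax Y (2 * Rabs (u 0) / C0))) as M2.
  pose proof (Rmax_l Y (2 * Rabs (u 0) / C0)) as M3.
  pose proof (Rmax_r Y (2 * Rabs (u 0) / C0)) as M4. fold Y' in M1, M2.
  specialize (HY y ltac:(lra)).
  assert (2 * Rabs (u 0) <= C0 * y) by (apply Rdiv_le_mult; lra).
  rewrite (Eu y). pose proof (Rabs_triang_inv (y * g y) (- u 0)) as T.
  rewrite Rabs_Ropp, Rabs_mult, (Rabs_right y) in T by lra.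
  replace (y * g y - - u 0) with (u 0 + y * g y) in T by ring. nra.
Qed.

Lemma exploding_of_N_dependent q p k c r : (2 <= k)%nat -> deg_bounded k q -> deg_bounded k p ->
  off_line_gap q p k c r ->
  (forall x y, line_diff q p c r x y = line_diff q p c r 0 y) ->
  ~ (exists d, forall x y, line_diff q p c r x y = d) ->
  exploding_differences q p.
Proof.
  intros Hk Hq Hp Hgap Hy Hnc. apply (exploding_of_line_bound q p k c r Hk Hgap).
  set (u := fun y => line_diff q p c r 0 y).
  assert (Hu : exists y, u y <> u 0).
  { apply NNPP. intros Hn. apply Hnc. exists (u 0). intros x y. rewrite Hy.
    apply NNPP. intros Hne. apply Hn. exists y. exact Hne. }
  destruct k as [|k']; [lia|].
  destruct (poly_fun_linear_growth k' u (line_diff_poly_in_y q p (S k') c r 0 Hq Hp) Hu)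
    as [C [Y [HC HY]]].
  intros delta Hd. destruct (large_N Y) as [N3 HN3].
  exists C. split; [exact HC|]. exists N3, (fun _ _ => false). split.
  - intros N _. rewrite filter_all_false by reflexivity. simpl.
    apply Rmult_le_pos; [lra|apply pos_INR].
  - intros N HN n _ _. rewrite Hy. apply HY. apply Rlt_le, HN3, HN.
Qed.

Lemma arbitrarily_many (P : nat -> Prop) : (forall N0 : nat, exists N, (N0 < N)%nat /\ P N) ->
  forall m, exists l, NoDup l /\ length l = m /\ forall N, In N l -> P N.
Proof.
  intros H m. induction m as [|m [l [Hl [Hlen HP]]]].
  - exists nil. split; [constructor|]. split; [reflexivity|]. intros; contradiction.
  - set (M := fold_right max 0%nat l).
    assert (HM : forall x, In x l -> (x <= M)%nat).
    { unfold M. clear. induction l as [|a l IH]; simpl; intros x Hx; [contradiction|].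
      destruct Hx as [E|Hx]; [subst; lia|]. specialize (IH x Hx). lia. }
    destruct (H M) as [N [HN HPN]]. exists (N :: l). split.
    + constructor; [|exact Hl]. intros Hin. specialize (HM N Hin). lia.
    + split; [simpl; rewrite Hlen; reflexivity|]. intros x [E|Hx]; [subst; exact HPN|auto].
Qed.

(* If D(., N) is constant for infinitely many N, then for each x the polynomial
   y |-> D(x, y) - D(0, y) of degree <= k has infinitely many roots. *)
Lemma line_diff_N_only q p k c r : deg_bounded k q -> deg_bounded k p ->
  ~ (exists N0 : nat, forall N : nat, (N0 < N)%nat ->
       exists x, line_diff q p c r x (INR N) <> line_diff q p c r 0 (INR N)) ->
  forall x y, line_diff q p c r x y = line_diff q p c r 0 y.
Proof.
  intros Hq Hp Hno.
  assert (Hinf : forall N0 : nat, exists N, (N0 < N)%nat /\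
                   forall x, line_diff q p c r x (INR N) = line_diff q p c r 0 (INR N)).
  { intros N0. apply NNPP. intros Hc. apply Hno. exists N0. intros N HN.
    apply NNPP. intros Hx. apply Hc. exists N. split; [exact HN|]. intros x.
    apply NNPP. intros Hne. apply Hx. exists x. exact Hne. }
  destruct (arbitrarily_many _ Hinf (S k)) as [l [Hl [Hlen HP]]].
  intros x. assert (H : forall y, line_diff q p c r x y - line_diff q p c r 0 y = 0).
  { apply (poly_fun_roots k _ (map INR l)).
    - apply (poly_fun_ext _ (fun y => line_diff q p c r x y + (-1) * line_diff q p c r 0 y));
        [intros; ring|].
      apply poly_fun_add; [|apply poly_fun_scal]; apply line_diff_poly_in_y; assumption.
    - apply NoDup_map_NoDup_ForallPairs; [|exact Hl]. intros a b _ _ E. apply INR_eq, E.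
    - rewrite length_map. lia.
    - intros y Hy. apply in_map_iff in Hy. destruct Hy as [N [EN HN]]. subst y.
      rewrite (HP N HN x). ring. }
  intros y. specialize (H y). lra.
Qed.

Lemma equivalent_alternative q p k c r d : off_line_gap q p k c r ->
  (forall x y, line_diff q p c r x y = d) ->
  forall delta : R, 0 < delta < 1 ->
    exists (W : R) (Nd : nat), 0 < W /\
      forall N : nat, (Nd < N)%nat ->
        forall n : nat, delta * INR N <= INR n <= INR N ->
          forall m : nat,
            (INR m = c * INR n + r /\ beval q (INR m) (INR N) - beval p (INR n) (INR N) = d) \/
            Rabs (beval q (INR m) (INR N) - beval p (INR n) (INR N)) >= W * INR N ^ (k - 1).
Proof.
  intros Hgap Hd delta Hdl. destruct (Hgap delta Hdl) as [W [HW [N1 HN1]]].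
  exists W, N1. split; [exact HW|]. intros N HN n Hn m.
  destruct (Req_dec (INR m) (c * INR n + r)) as [E|E].
  - left. split; [exact E|]. rewrite E. apply (Hd (INR n) (INR N)).
  - right. apply Rle_ge, (HN1 N HN n Hn m E).
Qed.

Lemma off_line_gap_of_spacing q p k c r e : 0 < e ->
  off_line_bound q p k c r (1 / e) ->
  (forall n m : nat, INR m <> c * INR n + r -> 1 / e <= Rabs (INR m - (c * INR n + r))) ->
  off_line_gap q p k c r.
Proof.
  intros He Hoff Hsp delta Hd. destruct (Hoff delta Hd) as [W [HW [N1 HN1]]].
  exists W. split; [exact HW|]. exists N1. intros N HN n Hn m Hm.
  exact (HN1 N HN n Hn m (Hsp n m Hm)).
Qed.

Theorem mainTheorem5 (p q : bipoly) (k : nat) (c r : R) :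
  (1 < k)%nat ->
  has_degree p k -> has_degree q k ->
  depends_on_n p -> depends_on_n q ->
  Pj_nonconstant p k -> Pj_nonconstant q k ->
  Pj q k 0 <= Pj p k 0 ->
  (forall y, 0 < y <= 1 -> gammak p q k y = c * y) ->
  (forall y, 0 < y <= 1 -> Rk p q k y = r) ->
  exploding_differences q p \/
  ((exists qc : Q, c = Q2R qc) /\ (exists qr : Q, r = Q2R qr) /\
   exists d : R,
     (forall x y : R, beval q (c * x + r) y - beval p x y = d) /\
     forall delta : R, 0 < delta < 1 ->
       exists (W : R) (Nd : nat), 0 < W /\
         forall N : nat, (Nd < N)%nat ->
           forall n : nat, delta * INR N <= INR n <= INR N ->
             forall m : nat,
               (INR m = c * INR n + r /\
                beval q (INR m) (INR N) - beval p (INR n) (INR N) = d) \/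
               Rabs (beval q (INR m) (INR N) - beval p (INR n) (INR N))
                 >= W * INR N ^ (k - 1)).
Proof.
  intros Hk Hdp Hdq _ _ Hpn Hqn H0 Hg Hr.
  assert (Hk2 : (2 <= k)%nat) by lia.
  pose proof (has_degree_bounded p k Hdp) as Hp. pose proof (has_degree_bounded q k Hdq) as Hq.
  destruct (linear_gamma_identities p q k c r Hpn Hqn H0 Hg Hr) as [Hc Hid].
  destruct (line_diff_small p q k c r Hk2 Hp Hq Hc Hid) as [K HK].
  assert (Hoff : forall t, 0 < t -> off_line_bound q p k c r t)
    by (intros t Ht; exact (off_line_separation p q k c r K t Hk2 Hqn Hc Ht HK)).
  destruct (classic (is_rational c /\ is_rational r)) as [[Hcq Hrq]|Hnr];
    [|left; exact (exploding_of_irrational q p k c r Hk2 Hoff Hnr)].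
  destruct (rational_line_arithmetic q p k c r Hq Hp Hcq Hrq) as [e [He [Hsp Hint]]].
  pose proof (off_line_gap_of_spacing q p k c r e He (Hoff (1 / e) ltac:(apply Rdiv_lt_0_compat; lra)) Hsp)
    as Hgap.
  destruct (classic (exists d, forall x y, line_diff q p c r x y = d)) as [[d Hd]|Hnd].
  - right. split; [exact Hcq|split; [exact Hrq|]].
    exists d. split; [exact Hd|exact (equivalent_alternative q p k c r d Hgap Hd)].
  - left.
    destruct (classic (exists N0 : nat, forall N : nat, (N0 < N)%nat ->
                exists x, line_diff q p c r x (INR N) <> line_diff q p c r 0 (INR N))) as [Hx|Hno].
    + exact (exploding_of_n_dependent q p k c r e Hk2 Hq Hp He Hint Hgap Hx).
    + exact (exploding_of_N_dependent q p k c r Hk2 Hq Hp Hgap (line_diff_N_only q p k c r Hq Hp Hno) Hnd).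
Qed.
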